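(* Let $p,q\ge1$ be coprime, $n=p+q\ge 2$, and let $\mathsf{T}_c$ be the lower Christoffel word determined by $p,q$, whose suffix array is arithmetically progressed with ratio $k$. Let $\mathbf{M}$ be the $n\times n$ matrix with $\mathbf{M}[i,j]=\mathsf{T}_c[(\mathsf{SA}_{\mathsf{T}_c}[i]+j-1)\bmod n]$. Then for every $i\in[1..n-1]$, rows $i$ and $i+1$ of $\mathbf{M}$ differ in exactly two positions, namely in columns $i(n-k)\bmod n$ and $(i(n-k)+1)\bmod n$.
   Context: Alphabet $\{\mathtt{a}<\mathtt{b}\}$; lexicographic order with a proper prefix smaller than the longer string; suffix array $\mathsf{SA}_{\mathsf{T}}$: permutation of $[1..n]$ such that $\mathsf{T}[\mathsf{SA}_{\mathsf{T}}[i]..n]$ is the $i$-th smallest suffix. $x\bmod n$ denotes the representative of $x$ modulo $n$ in $[1..n]$; $x\operatorname{mod}_0 n$ the representative in $[0..n-1]$. An arithmetically progressed permutation of length $n$ with ratio $k\in[1..n-1]$ is a permutation $P$ of $[1..n]$ with $P[i+1]=P[i]+k\bmod n$. Lower Christoffel word determined by coprime $p,q\ge1$: the string $\mathsf{T}_c$ of length $n=p+q$ with $\mathsf{T}_c[i]=\mathtt{a}$ if $(i-1)q\operatorname{mod}_0 n< iq\operatorname{mod}_0 n$ and $\mathtt{b}$ otherwise, $i\in[1..n]$. *)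

From mathcomp Require Import all_boot.
Set Implicit Arguments. Unset Strict Implicit. Unset Printing Implicit Defensive.

(* Alphabet {a < b}: a is [false], b is [true]. Strings are [seq bool];
   positions are 1-indexed as in the paper. *)
Definition letter_a : bool := false.
Definition letter_b : bool := true.

Fixpoint lex_lt (s t : seq bool) : bool :=
  match s, t with
  | [::], [::] => false
  | [::], _ :: _ => true
  | _ :: _, [::] => false
  | x :: s', y :: t' => if x == y then lex_lt s' t' else (~~ x) && y
  end.

Definition charAt (T : seq bool) (i : nat) : bool := nth letter_a T i.-1.

Definition suffix (T : seq bool) (s : nat) : seq bool := drop s.-1 T.

Definition mod1 (x n : nat) : nat := if x %% n == 0 then n else x %% n.

Definition is_suffix_array (T : seq bool) (SA : nat -> nat) : Prop :=
  let n := size T in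
  (forall i, 1 <= i <= n -> 1 <= SA i <= n) /\
  {in [pred i | 1 <= i <= n] &, injective SA} /\
  (forall i, 1 <= i < n -> lex_lt (suffix T (SA i)) (suffix T (SA i.+1))).

Definition arith_progressed (n : nat) (P : nat -> nat) (k : nat) : Prop :=
  [/\ 1 <= k <= n - 1,
      (forall i, 1 <= i <= n -> 1 <= P i <= n),
      {in [pred i | 1 <= i <= n] &, injective P} &
      (forall i, 1 <= i < n -> P i.+1 = mod1 (P i + k) n)].

Definition christoffel (p q : nat) : seq bool :=
  let n := p + q in
  [seq (if ((i.-1 * q) %% n < (i * q) %% n) then letter_a else letter_b)
  | i <- iota 1 n].

Definition rotM (T : seq bool) (SA : nat -> nat) (i j : nat) : bool :=
  charAt T (mod1 (SA i + j - 1) (size T)).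

From Pilot Require Import Defs.
From mathcomp Require Import all_boot zify.

(* The letter T_c[r] is b exactly when the "phase"
   (r-1)q mod n is at least p, so the suffix starting at r reads the
   thresholded orbit w, w + q, w + 2q, ... (mod n) of its phase w.  Since
   these bits are the increments of the floors (w + mq) / n, a larger phase
   yields a lexicographically larger suffix; as r |-> phase r is injective
   on [1..n], the suffix array lists the positions by increasing phase, i.e.
   phase (SA i) = i - 1.  Two consequences follow:
   - SA[2] = SA[1] + k (mod n) gives kq = 1 (mod n);
   - M[i,j] is b iff (i - 1 + (j - 1)q) mod n >= p, so rows i and i+1 differ
     at column j iff this residue is n - 1 or p - 1, and solving these two
     congruences with the inverse k of q yields the columns c2 and c1. *)

Set Implicit Arguments.
Unset Strict Implicit.

Lemma lex_lt_first_diff (s t : seq bool) (m0 : nat) :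
  m0 < size s -> m0 < size t ->
  (forall m, m < m0 -> nth false s m = nth false t m) ->
  nth false s m0 = false -> nth false t m0 = true -> lex_lt s t.
Proof.
elim: s t m0 => [|x s IHs] [|y t] [|m0] //=; first by move=> _ _ _ -> ->.
move=> lt_s lt_t agree s_m0 t_m0; have /= -> := agree 0 isT; rewrite eqxx.
by apply: (IHs t m0) => // m lt_m; apply: (agree m.+1).
Qed.

Lemma lex_lt_prefix (s t : seq bool) :
  size s < size t ->
  (forall m, m < size s -> nth false s m = nth false t m) -> lex_lt s t.
Proof.
elim: s t => [|x s IHs] [|y t] //= lt_st agree.
have /= -> := agree 0 isT; rewrite eqxx.
by apply: IHs => // m lt_m; apply: (agree m.+1).
Qed.

Lemma lex_lt_irr (s : seq bool) : lex_lt s s = false.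
Proof. by elim: s => //= x s ->; rewrite eqxx. Qed.

Lemma lex_lt_asym (s t : seq bool) : lex_lt s t -> lex_lt t s -> False.
Proof.
elim: s t => [|x s IHs] [|y t] //=; rewrite eq_sym.
by case: eqP => [_|]; [apply: IHs | case: x; case: y].
Qed.

Lemma first_difference (f g : nat -> bool) (L : nat) :
  (forall m, m < L -> f m = g m) \/
  exists2 m0, m0 < L & (forall m, m < m0 -> f m = g m) /\ f m0 != g m0.
Proof.
case: (pickP (fun m : 'I_L => f m != g m)) => [m1 ne_m1 | agree]; last first.
  by left=> m lt_mL; have /negbFE/eqP := agree (Ordinal lt_mL).
have ex_diff : exists m, (m < L) && (f m != g m) by exists m1; rewrite ltn_ord.
case: (ex_minnP ex_diff) => m0 /andP[lt_m0L ne_m0] min_m0.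
right; exists m0 => //; split=> // m lt_mm0; apply/eqP/negP => /negP ne.
by have := min_m0 m; rewrite ne (ltn_trans lt_mm0 lt_m0L) => /(_ isT); lia.
Qed.

Lemma modn_succ (n w : nat) : 0 < n ->
  w.+1 %% n = if w %% n == n.-1 then 0 else (w %% n).+1.
Proof.
move=> n_gt0; have lt_wn := ltn_mod w n.
rewrite -addn1 -modnDml; case: eqP => [-> | ne].
  by rewrite addn1 prednK // modnn.
by rewrite modn_small addn1 //; lia.
Qed.

Lemma mod1E (a n : nat) : 0 < a -> 0 < n -> mod1 a n = (a.-1 %% n).+1.
Proof.
case: a => // a _ n_gt0; rewrite /mod1 modn_succ //=.
by case: (a %% n =P n.-1) => [-> | _] //=; rewrite prednK.
Qed.

Lemma mod1_range (a n : nat) : 0 < n -> 1 <= mod1 a n <= n.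
Proof. by move=> n_gt0; rewrite /mod1; case: eqP; have := ltn_mod a n; lia. Qed.

Lemma eq_mod1 (a b n : nat) : 0 < a <= n -> 0 < b ->
  (a == b %[mod n]) = (a == mod1 b n).
Proof.
case: a => // a; case: b => // b /andP[_ lt_an] _.
rewrite mod1E //; last by lia.
by rewrite -(addn1 a) -(addn1 b) eqn_modDr (modn_small lt_an) !addn1 eqSS.
Qed.

Lemma threshold_flip (n p w : nat) : 0 < p < n ->
  ((p <= w %% n) != (p <= w.+1 %% n)) <-> (w %% n = n.-1 \/ w %% n = p.-1).
Proof.
move=> /andP[p_gt0 lt_pn]; have lt_wn : w %% n < n by rewrite ltn_mod; lia.
rewrite modn_succ; last by lia.
case: (w %% n =P n.-1) => [-> | ne].
  split=> _; first by left.
  by case: leqP; case: leqP => // *; lia.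
split=> [| [// | ->]].
  by case: leqP; case: leqP => //= *; right; lia.
by case: leqP; case: leqP => // *; lia.
Qed.

Lemma complement_residue (p q y : nat) : 0 < p -> y < p + q ->
  ((y + q.+1) %% (p + q) == 0) = (y == p.-1).
Proof.
move=> p_gt0 lt_y; have [lt_sum | le_sum] := ltnP (y + q.+1) (p + q).
  by rewrite modn_small //; lia.
by rewrite (_ : y + q.+1 = (y + q.+1 - (p + q)) + (p + q)) ?modnDr ?modn_small; lia.
Qed.

(* If k is an inverse of q modulo n, then i + Mq = 0 (mod n) is solved by
   M = -ik = i(n - k) (mod n). *)
Lemma solve_congruence (n k q i M : nat) : 0 < n -> k <= n -> k * q %% n = 1 ->
  ((i + M * q) %% n == 0) = (M == i * (n - k) %[mod n]).
Proof.
move=> n_gt0 le_kn kq_1.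
have ik_0 : (i * (n - k) + i * k) %% n = 0 by rewrite -mulnDr subnK // modnMl.
apply/idP/idP => [/eqP sum_0 | /eqP M_eq].
  have prod_0 : ((i + M * q) * k) %% n = 0 by rewrite -modnMml sum_0 mul0n mod0n.
  rewrite mulnDl -mulnA -modnDmr -modnMmr (mulnC q) kq_1 muln1 modnDmr in prod_0.
  by rewrite -(eqn_modDr (i * k)) ik_0 addnC prod_0.
have one_q : (1 + (n - k) * q) %% n = 0.
  by rewrite -kq_1 modnDml -mulnDl subnKC // modnMr.
apply/eqP; rewrite -modnDmr -modnMml M_eq modnMml modnDmr mulnAC -mulnA.
by rewrite -{1}(muln1 i) -mulnDr (mulnC q) -modnMmr one_q muln0 mod0n.
Qed.

Lemma incr_bounded_id (f : nat -> nat) (n : nat) :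
  (forall i, 1 <= i < n -> f i < f i.+1) -> (forall i, f i < n) ->
  forall i, 1 <= i <= n -> f i = i.-1.
Proof.
move=> f_incr f_lt i i_in.
have lower : forall j, 1 <= j <= n -> j.-1 <= f j.
  elim=> [// | [// | j] IHj] j_in.
  by have := f_incr j.+1 (ltac:(lia)); have := IHj (ltac:(lia)); lia.
have upper : forall d, d < n -> f (n - d) + d <= n.-1.
  elim=> [| d IHd] lt_dn; first by rewrite subn0 addn0; have := f_lt n; lia.
  have := f_incr (n - d.+1) (ltac:(lia)); rewrite (_ : (n - d.+1).+1 = n - d); last lia.
  by have := IHd (ltac:(lia)); lia.
by have := lower i i_in; have := upper (n - i) (ltac:(lia)); rewrite subKn; lia.
Qed.

Section ChristoffelSuffixes.
Variables p q : nat.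
Hypotheses (p_gt0 : 0 < p) (q_gt0 : 0 < q).
Local Notation n := (p + q).
Local Notation T := (christoffel p q).

Definition phase (r : nat) : nat := r.-1 * q %% n.

Definition orbit_bit (w m : nat) : bool := p <= (w + m * q) %% n.

Lemma size_christoffel : size T = n.
Proof. by rewrite size_map size_iota. Qed.

Lemma christoffel_letter (r : nat) : 0 < r ->
  (if r.-1 * q %% n < r * q %% n then letter_a else letter_b) = (p <= phase r).
Proof.
move=> r_gt0; have -> : r * q = r.-1 * q + q by case: r r_gt0 => // r _; rewrite mulSn addnC.
rewrite -modnDml /phase.
have : r.-1 * q %% n < n by rewrite ltn_mod; lia.
move: (r.-1 * q %% n) => y lt_yn.
have [lt_yp | le_py] := ltnP y p.
  rewrite modn_small; last lia.
  by have -> : y < y + q by lia.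
have -> : y + q = (y - p) + n by lia.
rewrite modnDr modn_small; last lia.
by have -> : y < y - p = false by lia.
Qed.

Lemma charAt_christoffel (r : nat) : 1 <= r <= n -> charAt T r = (p <= phase r).
Proof.
move=> /andP[r_gt0 le_rn]; rewrite /charAt (nth_map 0) ?size_iota; last by lia.
by rewrite nth_iota ?christoffel_letter; [congr (_ <= phase _) | |]; lia.
Qed.

Lemma suffix_christoffel (s : nat) : 1 <= s <= n ->
  Defs.suffix T s = mkseq (orbit_bit (phase s)) (n - s.-1).
Proof.
move=> /andP[s_gt0 le_sn]; rewrite /Defs.suffix -map_drop drop_iota.
apply: (@eq_from_nth _ false); first by rewrite size_map size_iota size_mkseq.
move=> m; rewrite size_map size_iota => lt_m.
rewrite (nth_map 0) ?size_iota // nth_iota // nth_mkseq // christoffel_letter; last by lia.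
rewrite /orbit_bit /phase modnDml -mulnDl; congr (_ <= (_ * _) %% _); lia.
Qed.

Lemma floor_step (w m : nat) :
  (w + m.+1 * q) %/ n = (w + m * q) %/ n + orbit_bit w m.
Proof.
have n_gt0 : 0 < n by lia.
rewrite /orbit_bit mulSn (addnC q) addnA; set a := w + m * q.
rewrite {1}(divn_eq a n) -addnA divnMDl //; congr (_ + _).
have lt_an := ltn_mod a n.
have [le_pa | lt_ap] := leqP; last by rewrite divn_small //; lia.
have ge1 : 1 <= (a %% n + q) %/ n by rewrite leq_divRL //; lia.
have lt2 : (a %% n + q) %/ n < 2 by rewrite ltn_divLR //; lia.
lia.
Qed.

Lemma floor_agree (u v m0 : nat) : u < n -> v < n ->
  (forall m, m < m0 -> orbit_bit v m = orbit_bit u m) ->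
  (u + m0 * q) %/ n = (v + m0 * q) %/ n.
Proof.
move=> lt_un lt_vn; elim: m0 => [|m IHm] agree; first by rewrite !addn0 !divn_small.
by rewrite !floor_step IHm ?(agree m) // => m' lt_m'; apply: agree; lia.
Qed.

Lemma first_diff_bits (u v m0 : nat) : v <= u < n ->
  (forall m, m < m0 -> orbit_bit v m = orbit_bit u m) ->
  orbit_bit v m0 != orbit_bit u m0 ->
  orbit_bit v m0 = false /\ orbit_bit u m0 = true.
Proof.
move=> /andP[le_vu lt_un] agree ne_m0.
have : (v + m0.+1 * q) %/ n <= (u + m0.+1 * q) %/ n by rewrite leq_div2r ?leq_add2r.
rewrite !floor_step (floor_agree lt_un (leq_ltn_trans le_vu lt_un) agree) // leq_add2l.
by move: ne_m0; case: (orbit_bit v m0); case: (orbit_bit u m0).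
Qed.

Lemma wrap_separates (u v L : nat) : v < u < n -> n %| u + L * q ->
  exists2 m, m < L & orbit_bit v m != orbit_bit u m.
Proof.
move=> /andP[lt_vu lt_un] dvd_n.
have [agree | [m lt_mL [_ ne_m]]] := first_difference (orbit_bit v) (orbit_bit u) L.
  have := floor_agree lt_un (ltn_trans lt_vu lt_un) agree.
  have : v + L * q < (u + L * q) %/ n * n by rewrite divnK // ltn_add2r.
  by rewrite -ltn_divLR ?addn_gt0 ?p_gt0 // => /[swap] ->; rewrite ltnn.
by exists m.
Qed.

Lemma suffix_lt_of_phase_lt (s t : nat) : 1 <= s <= n -> 1 <= t <= n ->
  phase t < phase s -> lex_lt (Defs.suffix T t) (Defs.suffix T s).
Proof.
move=> s_in t_in lt_ts; rewrite !suffix_christoffel //.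
set u := phase s; set v := phase t; set Ls := n - s.-1; set Lt := n - t.-1.
have lt_un : u < n by rewrite ltn_mod; lia.
have [agree | [m0 lt_m0 [agree ne_m0]]] :=
  first_difference (orbit_bit v) (orbit_bit u) (minn Lt Ls).
  have [lt_LtLs | lt_LsLt | eq_L] := ltngtP Lt Ls.
  - apply: lex_lt_prefix; rewrite !size_mkseq // => m lt_m.
    by rewrite !nth_mkseq ?agree //; lia.
  - have dvd_n : n %| u + Ls * q.
      by rewrite /dvdn /u /phase modnDml -mulnDl subnKC ?modnMr //; lia.
    have [m lt_m] := @wrap_separates u v Ls (ltac:(lia)) dvd_n.
    by rewrite agree ?eqxx //; lia.
  - by move: lt_ts; rewrite /u /v (_ : s = t) ?ltnn //; lia.
have [bit_v bit_u] := @first_diff_bits u v m0 (ltac:(lia)) agree ne_m0.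
by apply: (lex_lt_first_diff (m0 := m0)); rewrite ?size_mkseq ?nth_mkseq //; try lia;
  move=> m lt_m; rewrite !nth_mkseq ?agree //; lia.
Qed.

End ChristoffelSuffixes.

Section RotationRows.
Variables (p q k : nat) (SA : nat -> nat).
Hypotheses (p_gt0 : 0 < p) (q_gt0 : 0 < q) (coprime_pq : coprime p q).
Hypothesis SA_suffix : is_suffix_array (christoffel p q) SA.
Hypothesis SA_arith : arith_progressed (p + q) SA k.
Local Notation n := (p + q).
Local Notation T := (christoffel p q).

Lemma phase_lt (r : nat) : phase p q r < n.
Proof. by rewrite ltn_mod; lia. Qed.

(* Since q is invertible mod n, distinct positions have distinct phases. *)
Lemma phase_inj (s t : nat) :
  1 <= s <= n -> 1 <= t <= n -> phase p q s = phase p q t -> s = t.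
Proof.
have coprime_nq : coprime n q by rewrite -coprime_modl modnDr coprime_modl.
wlog le_st : s t / s <= t => [hwlog | s_in t_in eq_st].
  by case: (leqP s t) => [|/ltnW] le; [apply: hwlog | move=> *; apply/esym/hwlog].
have : n %| (t - s) * q.
  rewrite /dvdn -(mod0n n) -(eqn_modDl (s.-1 * q)) addn0 -mulnDl.
  by rewrite (_ : s.-1 + (t - s) = t.-1); [apply/eqP/esym | lia].
rewrite Gauss_dvdl //; have [|pos] := posnP (t - s); first lia.
by move/(dvdn_leq pos); lia.
Qed.

Lemma SA_range (i : nat) : 1 <= i <= n -> 1 <= SA i <= n.
Proof. by case: SA_suffix; rewrite /= size_christoffel => range _; apply: range. Qed.

Lemma SA_phase_lt (i : nat) : 1 <= i < n -> phase p q (SA i) < phase p q (SA i.+1).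
Proof.
move=> i_in; case: SA_suffix => _ [_]; rewrite /= size_christoffel => /(_ i i_in) lt_suf.
have SAi_in := SA_range (ltac:(lia) : 1 <= i <= n).
have SAi1_in := SA_range (ltac:(lia) : 1 <= i.+1 <= n).
case: ltngtP => // [gt_phase | eq_phase].
  by case: (lex_lt_asym lt_suf); apply: suffix_lt_of_phase_lt.
by move: lt_suf; rewrite (phase_inj SAi_in SAi1_in eq_phase) lex_lt_irr.
Qed.

Lemma SA_phase (i : nat) : 1 <= i <= n -> phase p q (SA i) = i.-1.
Proof. exact: (incr_bounded_id SA_phase_lt (fun r => phase_lt (SA r))). Qed.

Lemma ratio_le : k <= n.
Proof. by case: SA_arith; lia. Qed.

(* Comparing the phases of SA[1] and SA[2] = SA[1] + k: the ratio k is the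
   inverse of q modulo n. *)
Lemma ratio_inverse : k * q %% n = 1.
Proof.
case: SA_arith => _ _ _ /(_ 1 (ltac:(lia))) SA2.
have SA1_in := SA_range (ltac:(lia) : 1 <= 1 <= n).
have := SA_phase (ltac:(lia) : 1 <= 2 <= n).
rewrite SA2 /phase mod1E; [|lia|lia].
rewrite (_ : (SA 1 + k).-1 = (SA 1).-1 + k) /=; last by lia.
by rewrite modnMml mulnDl -modnDml -/(phase p q (SA 1)) SA_phase //; lia.
Qed.

Lemma rotM_bit (i j : nat) : 1 <= i <= n -> 1 <= j <= n ->
  rotM T SA i j = (p <= (i.-1 + j.-1 * q) %% n).
Proof.
move=> i_in j_in; have SAi_in := SA_range i_in.
rewrite /rotM size_christoffel mod1E; [|lia|lia].
rewrite (charAt_christoffel p_gt0 q_gt0) /phase /=; last first.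
  by have := ltn_mod (SA i + j - 1).-1 n; lia.
rewrite modnMml (_ : (SA i + j - 1).-1 = (SA i).-1 + j.-1); last lia.
by rewrite mulnDl -modnDml -/(phase p q (SA i)) (SA_phase i_in).
Qed.

Lemma shift_gt0 (i : nat) : 0 < i < n -> 0 < i * (n - k).
Proof. by case: SA_arith; rewrite muln_gt0; lia. Qed.

Lemma wrap_column (i j : nat) : 0 < i -> 1 <= j <= n ->
  (i.-1 + j.-1 * q) %% n = n.-1 <-> j = mod1 (i * (n - k) + 1) n.
Proof.
move=> i_gt0 j_in.
have -> : (i.-1 + j.-1 * q) %% n = n.-1 <-> (i + j.-1 * q) %% n == 0.
  rewrite -(prednK i_gt0) addSn modn_succ; last lia.
  by case: (_ %% n =P n.-1) => [-> | ne]; split=> // /ne.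
rewrite (solve_congruence i _ _ ratio_le ratio_inverse); last lia.
rewrite -(eqn_modDr 1) (addn1 j.-1) prednK; last lia.
by rewrite eq_mod1 ?addn_gt0 ?orbT //; split=> /eqP.
Qed.

Lemma threshold_column (i j : nat) : 0 < i < n -> 1 <= j <= n ->
  (i.-1 + j.-1 * q) %% n = p.-1 <-> j = mod1 (i * (n - k)) n.
Proof.
move=> i_in j_in.
have -> : (i.-1 + j.-1 * q) %% n = p.-1 <-> (i + j * q) %% n == 0.
  have -> : i + j * q = i.-1 + j.-1 * q + q.+1.
    by case: j j_in => // j _; case: i i_in => // i _; rewrite mulSn /=; lia.
  rewrite -(modnDml (i.-1 + j.-1 * q)) complement_residue ?ltn_mod //; last lia.
  by split=> /eqP.
rewrite (solve_congruence i _ _ ratio_le ratio_inverse); last lia.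
by rewrite eq_mod1 ?shift_gt0 //; split=> /eqP.
Qed.

Lemma rows_differ (i j : nat) : 0 < i < n -> 1 <= j <= n ->
  rotM T SA i j != rotM T SA i.+1 j <->
  j = mod1 (i * (n - k)) n \/ j = mod1 (i * (n - k) + 1) n.
Proof.
move=> i_in j_in; rewrite !rotM_bit /=; try lia.
rewrite (_ : i + j.-1 * q = (i.-1 + j.-1 * q).+1); last lia.
rewrite threshold_flip; last lia.
rewrite (@wrap_column i j (ltac:(lia)) j_in) (threshold_column i_in j_in).
by split=> -[]; auto.
Qed.

(* c1 and c2 carry the distinct residues p - 1 and n - 1. *)
Lemma columns_distinct (i : nat) : 0 < i < n ->
  mod1 (i * (n - k)) n != mod1 (i * (n - k) + 1) n.
Proof.
move=> i_in; set c1 := mod1 (i * (n - k)) n.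
have c1_in : 1 <= c1 <= n by apply: mod1_range; lia.
apply/eqP => eq_c; have := proj2 (threshold_column i_in c1_in) erefl.
by rewrite (proj2 (@wrap_column i c1 (ltac:(lia)) c1_in) eq_c); lia.
Qed.

End RotationRows.

Theorem mainTheorem13 (p q : nat) (SA : nat -> nat) (k : nat) :
  0 < p -> 0 < q -> coprime p q -> 2 <= p + q ->
  is_suffix_array (christoffel p q) SA ->
  arith_progressed (p + q) SA k ->
  forall i, 1 <= i <= p + q - 1 ->
    let n := p + q in
    let c1 := mod1 (i * (n - k)) n in
    let c2 := mod1 (i * (n - k) + 1) n in
    c1 != c2 /\
    (forall j, 1 <= j <= n ->
       (rotM (christoffel p q) SA i j != rotM (christoffel p q) SA i.+1 j)
       <-> (j = c1 \/ j = c2)).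
Proof.
move=> p_gt0 q_gt0 coprime_pq _ SA_suffix SA_arith i i_in n c1 c2.
have i_range : 0 < i < p + q by lia.
split; first exact: (columns_distinct p_gt0 q_gt0 coprime_pq SA_suffix SA_arith i_range).
by move=> j; apply: (rows_differ p_gt0 q_gt0 coprime_pq SA_suffix SA_arith i_range).
Qed.
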